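(* Let $\mu\in\mathbb F_q\setminus\{0\}$. Any family of pairwise disjoint generators of $\mathcal Q_\mu$ that are totally isotropic with respect to $\perp_0$ has at most $q+1$ members.
   Context: Let $q$ be an even prime power and $n\ge 2$ an integer. Let $\mathrm{PG}(2n+1,q)$ have homogeneous coordinates $(X_1,\dots,X_{2n+2})$. Fix $\delta\in\mathbb F_q$ such that $X^2+X+\delta$ is irreducible over $\mathbb F_q$. For $\mu\in\mathbb F_q$ let $\mathcal Q_\mu$ be the elliptic quadric $X_1^2+X_1X_{2n+2}+\delta X_{2n+2}^2+\sum_{i=2}^{n+1}X_iX_{2n+3-i}+\mu(X_{2n}^2+X_{2n}X_{2n+1}+\delta X_{2n+1}^2)=0$, whose generators are $(n-1)$-spaces. Let $\perp_0$ be the symplectic polarity defined by the alternating form $B_0(X,Y)=\sum_{i=1}^{2n+2}X_iY_{2n+3-i}$. *)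

From HB Require Import structures.
From mathcomp Require Import all_boot all_order all_algebra all_field.
Set Implicit Arguments. Unset Strict Implicit. Unset Printing Implicit Defensive.
Import GRing.Theory.
Local Open Scope ring_scope.

(* PG(2n+1,q) is modelled by the vector space 'rV[F]_(2n+2) = 'rV[F]_(n.*2.+2).
   Coordinate X_i (1 <= i <= 2n+2, as in the paper) is entry i-1. *)
Definition coord (F : fieldType) (n : nat) (x : 'rV[F]_(n.*2.+2)) (i : nat) : F :=
  x ord0 (inord i.-1).

Definition Qform (F : fieldType) (n : nat) (delta mu : F) (x : 'rV[F]_(n.*2.+2)) : F :=
  let X := coord x in
  X 1%N ^+ 2 + X 1%N * X (n.*2.+2) + delta * X (n.*2.+2) ^+ 2
  + \sum_(2 <= i < n.+2) X i * X (n.*2.+3 - i)%N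
  + mu * (X (n.*2) ^+ 2 + X (n.*2) * X (n.*2.+1) + delta * X (n.*2.+1) ^+ 2).

Definition B0 (F : fieldType) (n : nat) (x y : 'rV[F]_(n.*2.+2)) : F :=
  \sum_(1 <= i < n.*2.+3) coord x i * coord y (n.*2.+3 - i)%N.

(* A generator of Q_mu: an (n-1)-dimensional projective subspace, i.e. an
   n-dimensional vector subspace, contained in the quadric. *)
Definition is_generator (F : fieldType) (n : nat) (delta mu : F)
    (U : {vspace 'rV[F]_(n.*2.+2)}) : Prop :=
  \dim U = n /\ forall x, x \in U -> Qform delta mu x = 0.

Definition totally_isotropic0 (F : fieldType) (n : nat)
    (U : {vspace 'rV[F]_(n.*2.+2)}) : Prop :=
  forall x y, x \in U -> y \in U -> B0 x y = 0.

From Pilot Require Import Defs.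
From HB Require Import structures.
From mathcomp Require Import all_boot all_order all_algebra all_field.
From mathcomp Require Import zify ring.
(* Re-imported so that [coord] denotes Defs.coord rather than vector.coord. *)
Import Defs.
Set Implicit Arguments. Unset Strict Implicit. Unset Printing Implicit Defensive.
Import GRing.Theory.
Local Open Scope ring_scope.

(* A generator U of Q_mu that is totally isotropic for B0 contains a point of
   the line spanned by e_2 and e_3.  First, X_(2n) and X_(2n+1) vanish on a
   subspace K of U of codimension at most 1: if X_(2n) is nonzero at u in U,
   polarising Q_mu at u forces X_(2n+1) = 0 on U meet ker X_(2n).  On
   K0 = K meet {X_4 = ... = X_(n+1) = 0} the quadric reduces to the anisotropic
   form X_1^2 + X_1 X_(2n+2) + delta X_(2n+2)^2, so X_1 = X_(2n+2) = 0 there,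
   and B0-isotropy makes the coordinates (X_(n+2), ..., X_(2n-1)) of K0
   orthogonal in F^(n-2) to the coordinates (X_4, ..., X_(n+1)) of K.  As
   dim K >= n - 1, counting dimensions yields a nonzero vector of K0 with
   X_(n+2) = ... = X_(2n-1) = 0, i.e. a point of the line.  Pairwise disjoint
   generators thus meet the line in distinct points, and it has q + 1 points. *)

Section Orthogonal.
Variables (F : fieldType) (m : nat).

Definition vbasis_mx (U : {vspace 'rV[F]_m}) : 'M[F]_(\dim U, m) :=
  \matrix_(i < \dim U) (vbasis U)`_i.

Lemma rank_vbasis_mx U : \rank (vbasis_mx U) = \dim U.
Proof.
apply/eqP; apply: inj_row_free => v vU0.
have /freeP free_basis := basis_free (vbasisP U).
apply/rowP => i; rewrite mxE; apply: (free_basis (fun j => v 0 j)).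
by rewrite -[RHS]vU0 mulmx_sum_row; apply: eq_bigr => j _; rewrite rowK.
Qed.

Lemma dimv_orthogonal (P Q : {vspace 'rV[F]_m}) :
    (forall p q, p \in P -> q \in Q -> (p *m q^T) 0 0 = 0) ->
  (\dim P + \dim Q <= m)%N.
Proof.
move=> PQ; rewrite -(rank_vbasis_mx P) -(rank_vbasis_mx Q) -(mxrank_tr (vbasis_mx Q)).
rewrite addnC -leq_subRL ?rank_leq_row // -mxrank_ker.
apply/mxrankS/sub_kermxP/matrixP => i j.
rewrite mxE [RHS]mxE; transitivity (((vbasis P)`_i *m ((vbasis Q)`_j)^T) 0 0).
  by rewrite mxE; apply: eq_bigr => k _; rewrite !mxE.
by apply: PQ; apply: vbasis_mem; rewrite mem_nth ?size_tuple.
Qed.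

End Orthogonal.

Lemma irreducible_quadratic_anisotropic (F : fieldType) (delta a b : F) :
    irreducible_poly ('X^2 + 'X + delta%:P) ->
  a ^+ 2 + a * b + delta * b ^+ 2 = 0 -> a = 0 /\ b = 0.
Proof.
move=> irr Qab; have [b0|bn0] := eqVneq b 0.
  by move: Qab; rewrite b0 mulr0 expr0n /= mulr0 !addr0 => /eqP; rewrite expf_eq0 => /eqP.
have root_ab : root ('X^2 + 'X + delta%:P) (a / b).
  rewrite /root !hornerE; apply/eqP.
  have -> : (a / b) ^+ 2 + a / b + delta = (a ^+ 2 + a * b + delta * b ^+ 2) / b ^+ 2.
    by field.
  by rewrite Qab mul0r.
have size3 : size ('X^2 + 'X + delta%:P : {poly F}) = 3%N.
  by rewrite -addrA size_polyDl ?size_polyXn // size_XaddC.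
have /(irredp_XsubCP irr)[] : ('X - (a / b)%:P) %| ('X^2 + 'X + delta%:P).
  by rewrite dvdp_XsubCl.
all: by move/eqp_size; rewrite size_XsubC ?size3 ?size_poly1.
Qed.

Section Coordinates.
Variables (F : fieldType) (n : nat).
Local Notation N := (n.*2.+2).
Local Notation V := 'rV[F]_N.

Lemma coordD (x y : V) i : coord (x + y) i = coord x i + coord y i.
Proof. by rewrite /coord mxE. Qed.

Lemma coordZ a (x : V) i : coord (a *: x) i = a * coord x i.
Proof. by rewrite /coord mxE. Qed.

Lemma coord0 i : coord (0 : V) i = 0.
Proof. by rewrite /coord mxE. Qed.

Lemma coord_inj (x y : V) :
  (forall l, (0 < l <= N)%N -> coord x l = coord y l) -> x = y.
Proof.
move=> xy; apply/rowP => j; have := xy j.+1; rewrite /coord /= inord_val.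
by rewrite (ord1 ord0) ltn_ord => ->.
Qed.

Definition coord_mx k (f : 'I_k -> nat) : 'M[F]_(N, k) :=
  \matrix_(a, j) (a.+1 == f j)%:R.

Definition coordmap k (f : 'I_k -> nat) : 'Hom(V, 'rV[F]_k) :=
  linfun (mulmxr (coord_mx f)).

Lemma coordmapE k (f : 'I_k -> nat) (x : V) j :
  (0 < f j <= N)%N -> coordmap f x 0 j = coord x (f j).
Proof.
move=> /andP[fj_gt0 fj_le]; rewrite lfunE /= mxE (bigD1 (inord (f j).-1)) //=.
rewrite big1 => [|a /negP neq_a]; last first.
  rewrite !mxE; case: eqP => [fj_a|]; last by rewrite mulr0.
  by exfalso; apply/neq_a/eqP/val_inj; rewrite -fj_a /= inordK.
by rewrite /coord_mx !mxE inordK ?prednK ?eqxx ?mulr1 ?addr0 // /coord (ord1 ord0).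
Qed.

Definition coordfun l : 'Hom(V, 'rV[F]_1) := coordmap (fun _ : 'I_1 => l).

Lemma coordfun_ker l (y : V) :
  (0 < l <= N)%N -> (y \in lker (coordfun l)) = (coord y l == 0).
Proof.
move=> hl; rewrite memv_ker; apply/eqP/eqP => [y0|yl0].
  by rewrite -(coordmapE (f := fun _ : 'I_1 => l) y (j := 0)) // y0 mxE.
by apply/rowP => j; rewrite ord1 coordmapE // yl0 mxE.
Qed.

Definition in_line23 (r : V) : Prop :=
  forall l, (0 < l <= N)%N -> l != 2%N -> l != 3%N -> coord r l = 0.

End Coordinates.

Section Forms.
Variables (F : fieldType) (n : nat).
Local Notation N := (n.*2.+2).
Local Notation V := 'rV[F]_N.

Definition Bmid (x y : V) := \sum_(2 <= i < n.+2) coord x i * coord y (n.*2.+3 - i).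

Lemma B0E (x y : V) :
  B0 x y = coord x 1 * coord y N + coord x N * coord y 1 + Bmid x y + Bmid y x.
Proof.
have upper_half : \sum_(n.+2 <= i < N) coord x i * coord y (n.*2.+3 - i) = Bmid y x.
  rewrite /Bmid (big_addn 0 N n.+2) (big_addn 0 n.+2 2) big_nat_rev.
  have -> : (N - n.+2 = n)%N by lia.
  have -> : (n.+2 - 2 = n)%N by lia.
  apply: eq_big_nat => i /andP[_ lt_i_n].
  by rewrite mulrC; congr (_ * _); congr (coord _ _); lia.
rewrite /B0 (@big_cat_nat _ _ _ n.+2) //=; try lia.
rewrite big_ltn // (big_nat_recr N n.+2) /=; last by lia.
rewrite upper_half; have -> : (n.*2.+3 - 1 = N)%N by lia.
rewrite subSn // subnn -/(Bmid x y); ring.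
Qed.

Lemma BmidDl (x y z : V) : Bmid (x + y) z = Bmid x z + Bmid y z.
Proof. by rewrite /Bmid -big_split; apply: eq_bigr => i _; rewrite coordD mulrDl. Qed.

Lemma BmidDr (x y z : V) : Bmid z (x + y) = Bmid z x + Bmid z y.
Proof. by rewrite /Bmid -big_split; apply: eq_bigr => i _; rewrite coordD mulrDr. Qed.

Lemma QformE (delta mu : F) (z : V) : Qform delta mu z =
  coord z 1 ^+ 2 + coord z 1 * coord z N + delta * coord z N ^+ 2 + Bmid z z
  + mu * (coord z (n.*2) ^+ 2 + coord z (n.*2) * coord z (n.*2.+1)
          + delta * coord z (n.*2.+1) ^+ 2).
Proof. by []. Qed.

Lemma QformD (delta mu : F) (x y : V) : (2 : F) = 0 ->
  Qform delta mu (x + y) = Qform delta mu x + Qform delta mu y + B0 x y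
    + mu * (coord x (n.*2) * coord y (n.*2.+1) + coord x (n.*2.+1) * coord y (n.*2)).
Proof.
move=> char2; rewrite !QformE B0E BmidDl !BmidDr !coordD.
apply/eqP; rewrite -subr_eq0; apply/eqP.
set a1 := coord x 1; set b1 := coord y 1; set aN := coord x N; set bN := coord y N.
set a2 := coord x (n.*2); set b2 := coord y (n.*2).
set a3 := coord x (n.*2.+1); set b3 := coord y (n.*2.+1).
transitivity (2 * (a1 * b1 + delta * aN * bN + mu * (a2 * b2 + delta * a3 * b3))).
  by ring.
by rewrite char2 mul0r.
Qed.

Hypothesis n_ge2 : (2 <= n)%N.

Lemma Bmid_split (x y : V) : Bmid x y =
  coord x 2 * coord y (n.*2.+1) + coord x 3 * coord y (n.*2)
  + \sum_(j < n - 2) coord x (j + 4) * coord y (n.*2 - 1 - j).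
Proof.
rewrite /Bmid big_ltn; last by lia.
rewrite big_ltn; last by lia.
rewrite (big_addn 0 n.+2 4) big_mkord addrA.
have -> : (n.+2 - 4 = n - 2)%N by lia.
have -> : (n.*2.+3 - 2 = n.*2.+1)%N by lia.
have -> : (n.*2.+3 - 3 = n.*2)%N by lia.
by congr (_ + _); apply: eq_bigr => j _; congr (_ * coord _ _); lia.
Qed.

Definition proj_low : 'Hom(V, 'rV[F]_(n - 2)) :=
  coordmap F n (fun j : 'I_(n - 2) => (j + 4)%N).

(* Entry j is X_(2n-1-j), the B0-partner of entry j of [proj_low]. *)
Definition proj_high : 'Hom(V, 'rV[F]_(n - 2)) :=
  coordmap F n (fun j : 'I_(n - 2) => (n.*2 - 1 - j)%N).

Lemma proj_lowE x (j : 'I_(n - 2)) : proj_low x 0 j = coord x (j + 4).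
Proof. by rewrite coordmapE //; have := ltn_ord j; lia. Qed.

Lemma proj_highE x (j : 'I_(n - 2)) : proj_high x 0 j = coord x (n.*2 - 1 - j).
Proof. by rewrite coordmapE //; have := ltn_ord j; lia. Qed.

Lemma proj_low_eq0 x l : proj_low x = 0 -> (4 <= l <= n.+1)%N -> coord x l = 0.
Proof.
move=> x_low0 hl; have lt_j : (l - 4 < n - 2)%N by lia.
have := proj_lowE x (Ordinal lt_j); rewrite x_low0 mxE /= => ->.
by congr (coord _ _); lia.
Qed.

Lemma proj_high_eq0 x l : proj_high x = 0 -> (n.+2 <= l < n.*2)%N -> coord x l = 0.
Proof.
move=> x_high0 hl; have lt_j : (n.*2 - 1 - l < n - 2)%N by lia.
have := proj_highE x (Ordinal lt_j); rewrite x_high0 mxE /= => ->.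
by congr (coord _ _); lia.
Qed.

Lemma Bmid_proj (x y : V) : coord y (n.*2) = 0 -> coord y (n.*2.+1) = 0 ->
  Bmid x y = (proj_low x *m (proj_high y)^T) 0 0.
Proof.
move=> y2n y2n1; rewrite Bmid_split y2n y2n1 !mulr0 !add0r mxE.
by apply: eq_bigr => j _; rewrite mxE proj_lowE proj_highE.
Qed.

End Forms.

Section Generator.
Variables (F : fieldType) (n : nat) (delta mu : F).
Hypotheses (n_ge2 : (2 <= n)%N) (char2 : (2 : F) = 0) (mu_neq0 : mu != 0).
Hypothesis delta_irr : irreducible_poly ('X^2 + 'X + delta%:P).
Local Notation N := (n.*2.+2).
Local Notation V := 'rV[F]_N.
Variable U : {vspace V}.
Hypotheses (U_gen : is_generator delta mu U) (U_iso : totally_isotropic0 U).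

Lemma generator_vanishing_subspace : exists K : {vspace V},
  [/\ (K <= U)%VS, (n <= (\dim K).+1)%N &
      forall y, y \in K -> coord y (n.*2) = 0 /\ coord y (n.*2.+1) = 0].
Proof.
case: U_gen => dimU QU.
have range2n : (0 < n.*2 <= N)%N by lia.
have range2n1 : (0 < n.*2.+1 <= N)%N by lia.
suff [l hl K_vanish] : exists2 l, (0 < l <= N)%N &
    forall y, y \in (U :&: lker (coordfun F n l))%VS ->
      coord y (n.*2) = 0 /\ coord y (n.*2.+1) = 0.
  exists (U :&: lker (coordfun F n l))%VS; split=> //; first exact: capvSl.
  have dim_img : (\dim (coordfun F n l @: U) <= 1)%N.
    by have := dimvS (subvf (coordfun F n l @: U)); rewrite dimvf.
  by rewrite -{1}dimU -(limg_ker_dim (coordfun F n l) U) -[X in (_ <= X)%N]addn1 leq_add2l.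
have [img0 | img_neq0] := eqVneq (coordfun F n (n.*2) @: U)%VS 0%VS.
  exists n.*2.+1 => [//| y /memv_capP[yU]]; rewrite coordfun_ker // => /eqP y2n1.
  split=> //; apply/eqP; rewrite -coordfun_ker // memv_ker.
  by rewrite -memv0 -img0 memv_img.
have /memv_imgP[u uU pick_u] := memv_pick (coordfun F n (n.*2) @: U)%VS.
have u2n : coord u (n.*2) != 0.
  by rewrite -coordfun_ker // memv_ker -pick_u vpick0.
exists n.*2 => [//| y /memv_capP[yU]]; rewrite coordfun_ker // => /eqP y2n.
split=> //; have := QformD delta mu u y char2.
rewrite !QU ?memvD // U_iso // y2n mulr0 addr0 !add0r => /esym/eqP.
by rewrite addr0 !mulf_eq0 (negPf mu_neq0) (negPf u2n) => /eqP.
Qed.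

Section Meeting.
Variable K : {vspace V}.
Hypotheses (KU : (K <= U)%VS) (dimK : (n <= (\dim K).+1)%N).
Hypothesis K_vanish :
  forall y, y \in K -> coord y (n.*2) = 0 /\ coord y (n.*2.+1) = 0.

Let K0 := (K :&: lker (proj_low F n))%VS.

Lemma K0_Bmid x y : x \in K0 -> y \in K -> Bmid x y = 0.
Proof.
move=> /memv_capP[_]; rewrite memv_ker => /eqP x_low0 /K_vanish[y2n y2n1].
by rewrite Bmid_proj // x_low0 mul0mx mxE.
Qed.

Lemma K0_coord_ends x : x \in K0 -> coord x 1 = 0 /\ coord x N = 0.
Proof.
move=> xK0; have /memv_capP[xK _] := xK0; have [x2n x2n1] := K_vanish xK.
case: U_gen => _ /(_ x (subvP KU x xK)); rewrite QformE K0_Bmid // x2n x2n1 => Qx.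
by apply: (irreducible_quadratic_anisotropic delta_irr); rewrite -Qx; ring.
Qed.

Lemma K0_B0 x y : x \in K0 -> y \in K ->
  B0 x y = (proj_low F n y *m (proj_high F n x)^T) 0 0.
Proof.
move=> xK0 yK; have /memv_capP[xK _] := xK0; have [x1 xN] := K0_coord_ends xK0.
have [x2n x2n1] := K_vanish xK.
by rewrite B0E K0_Bmid // x1 xN !mul0r !add0r -Bmid_proj.
Qed.

Lemma K0_line23 x : x \in K0 -> proj_high F n x = 0 -> in_line23 x.
Proof.
move=> xK0 x_high0 l hl l_neq2 l_neq3; have /memv_capP[xK] := xK0.
rewrite memv_ker => /eqP x_low0; have [x1 xN] := K0_coord_ends xK0.
have [x2n x2n1] := K_vanish xK.
have [l_lt4|l_ge4] := ltnP l 4; first by have -> : l = 1%N by lia.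
have [l_le|l_gt] := leqP l n.+1; first by apply: proj_low_eq0 => //; lia.
have [l_lt|l_ge] := ltnP l n.*2; first by apply: proj_high_eq0 => //; lia.
have [->|l_neq2n] := eqVneq l n.*2; first by [].
have [->|l_neq2n1] := eqVneq l n.*2.+1; first by [].
by have -> : l = N by lia.
Qed.

Lemma subspace_meets_line23 : exists2 r, r \in K & r != 0 /\ in_line23 r.
Proof.
have [high_inj | high_ker] := eqVneq (K0 :&: lker (proj_high F n))%VS 0%VS; last first.
  have /memv_capP[rK0] := memv_pick (K0 :&: lker (proj_high F n)).
  rewrite memv_ker => /eqP r_high0.
  exists (vpick (K0 :&: lker (proj_high F n))); first by have /memv_capP[] := rK0.
  by rewrite vpick0; split=> //; exact: K0_line23.
have orth : (\dim (proj_low F n @: K) + \dim (proj_high F n @: K0) <= n - 2)%N.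
  apply: dimv_orthogonal => _ _ /memv_imgP[y yK ->] /memv_imgP[x xK0 ->].
  have /memv_capP[xK _] := xK0.
  by rewrite -K0_B0 // U_iso // (subvP KU).
have := limg_ker_dim (proj_low F n) K.
move: orth; rewrite (limg_dim_eq high_inj) -/K0 => orth dimK0.
have : (n <= (n - 2).+1)%N by rewrite (leq_trans dimK) // ltnS -dimK0 addnC.
by lia.
Qed.

End Meeting.

Lemma generator_meets_line23 : exists r, [/\ r \in U, r != 0 & in_line23 r].
Proof.
have [K [KU dimK K_vanish]] := generator_vanishing_subspace.
have [r rK [r_neq0 r_line]] := subspace_meets_line23 KU dimK K_vanish.
by exists r; split=> //; exact: (subvP KU).
Qed.

End Generator.

Section Line23.
Variables (F : fieldType) (n : nat).
Local Notation V := 'rV[F]_(n.*2.+2).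

Lemma line23_coord3 (r : V) : r != 0 -> in_line23 r -> coord r 2 = 0 -> coord r 3 != 0.
Proof.
move=> r_neq0 r_line r2; apply: contraNneq r_neq0 => r3.
apply/eqP/coord_inj => l hl; rewrite coord0.
have [->|l_neq2] := eqVneq l 2%N; first by [].
have [->|l_neq3] := eqVneq l 3%N; first by [].
exact: r_line.
Qed.

Lemma line23_proportional (r s : V) : r != 0 -> in_line23 r -> in_line23 s ->
  coord s 2 * coord r 3 = coord s 3 * coord r 2 -> exists c, s = c *: r.
Proof.
move=> r_neq0 r_line s_line cross.
suff [c s2 s3] : exists2 c, coord s 2 = c * coord r 2 & coord s 3 = c * coord r 3.
  exists c; apply: coord_inj => l hl; rewrite coordZ.
  have [->|l_neq2] := eqVneq l 2%N; first by [].
  have [->|l_neq3] := eqVneq l 3%N; first by [].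
  by rewrite r_line ?s_line ?mulr0.
have [r2|r2] := eqVneq (coord r 2) 0.
  have r3 := line23_coord3 r_neq0 r_line r2.
  exists (coord s 3 / coord r 3); last by rewrite divfK.
  move: cross; rewrite r2 !mulr0 => /eqP.
  by rewrite mulf_eq0 (negPf r3) orbF => /eqP.
exists (coord s 2 / coord r 2); first by rewrite divfK.
by apply: (mulIf r2); rewrite mulrAC divfK // cross.
Qed.

End Line23.

Lemma card_disjoint_meet_line23 (F : finFieldType) (n k : nat)
    (S : 'I_k -> {vspace 'rV[F]_(n.*2.+2)}) (r : 'I_k -> 'rV[F]_(n.*2.+2)) :
    (forall i, r i \in S i) -> (forall i, r i != 0) -> (forall i, in_line23 (r i)) ->
    (forall i j, i != j -> (S i :&: S j = 0)%VS) ->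
  (k <= #|F|.+1)%N.
Proof.
move=> rS r_neq0 r_line S_disj.
pose slope i : option F :=
  if coord (r i) 2 == 0 then None else Some (coord (r i) 3 / coord (r i) 2).
suff /leq_card : injective slope by rewrite card_ord card_option.
move=> i j slope_ij; apply: contraTeq (r_neq0 j) => neq_ij.
have [|c rj] := @line23_proportional _ _ (r i) (r j) (r_neq0 i) (r_line i) (r_line j).
  move: slope_ij; rewrite /slope.
  have [ri2|ri2] := eqVneq (coord (r i) 2) 0; have [rj2|rj2] := eqVneq (coord (r j) 2) 0 => //.
    by rewrite ri2 rj2 mulr0 mul0r.
  by case=> /eqP; rewrite eqr_div // mulrC => /eqP.
by rewrite -memv0 -(S_disj _ _ neq_ij) memv_cap rS andbT rj memvZ.
Qed.

Theorem mainTheorem10 (F : finFieldType) (n : nat) (delta mu : F)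
    (char2 : 2%N \in [pchar F]) (n_ge2 : (2 <= n)%N)
    (delta_irr : irreducible_poly ('X^2 + 'X + delta%:P))
    (mu_neq0 : mu != 0)
    (k : nat) (S : 'I_k -> {vspace 'rV[F]_(n.*2.+2)})
    (S_gen : forall i, is_generator delta mu (S i))
    (S_iso : forall i, totally_isotropic0 (S i))
    (S_disj : forall i j, i != j -> (S i :&: S j)%VS = 0%VS) :
  (k <= #|F| + 1)%N.
Proof.
have two0 : (2 : F) = 0 := pcharf0 char2.
have meets i := generator_meets_line23 n_ge2 two0 mu_neq0 delta_irr (S_gen i) (S_iso i).
have [r r_meets] := fin_all_exists meets.
rewrite addn1; apply: (card_disjoint_meet_line23 (r := r) _ _ _ S_disj) => i;
  by case: (r_meets i).
Qed.
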